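(* Let $\{GR_n\}$ be the Gaussian Tetranacci-Lucas numbers. Then for every $n\ge1$: (a) $\sum_{k=1}^nGR_k=\frac13\left(GR_{n+2}+2GR_n+GR_{n-1}-10+2i\right)$; (b) $\sum_{k=1}^nGR_{2k+1}=\frac13\left(2GR_{2n+2}+GR_{2n}-GR_{2n-1}-11-2i\right)$; (c) $\sum_{k=1}^nGR_{2k}=\frac13\left(2GR_{2n+1}+GR_{2n-1}-GR_{2n-2}-2-8i\right)$.
   Context: The Gaussian Tetranacci-Lucas numbers are defined by $GR_0=4-i$, $GR_1=1+4i$, $GR_2=3+i$, $GR_3=7+3i$ and $GR_n=GR_{n-1}+GR_{n-2}+GR_{n-3}+GR_{n-4}$ for $n\ge4$. *)

From mathcomp Require Import all_boot all_order all_algebra all_field.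
Set Implicit Arguments. Unset Strict Implicit. Unset Printing Implicit Defensive.
Import GRing.Theory Num.Theory.
Local Open Scope ring_scope.

Fixpoint GR (n : nat) : algC :=
  match n with
  | 0 => 4 - 'i
  | 1 => 1 + 4 * 'i
  | 2 => 3 + 'i
  | 3 => 7 + 3 * 'i
  | S ((S ((S ((S m) as m1)) as m2)) as m3) => GR m3 + GR m2 + GR m1 + GR m
  end.

From mathcomp Require Import all_boot all_order all_algebra all_field.
From mathcomp Require Import ring.
Import GRing.Theory Num.Theory.
Local Open Scope ring_scope.

(* For any sequence with the Tetranacci recurrence, three times a partial sum
   (of all terms, of the odd-indexed or of the even-indexed ones) differs from a
   fixed combination of the last few terms by a constant: adding the next
   summand changes both sides by the same amount, by one or two applications of
   the recurrence. The constant is read off at the first index; for the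
   Gaussian Tetranacci-Lucas initial values it gives -10 + 2i, -11 - 2i and
   -2 - 8i. *)

Section TetranacciSums.

Context {R : comPzRingType} {a : nat -> R}.
Hypothesis a_rec : forall m, a m.+4 = a m.+3 + a m.+2 + a m.+1 + a m.

Lemma tetranacci_sum n :
  3 * \sum_(1 <= k < n.+2) a k = a n.+3 + 2 * a n.+1 + a n + (a 1 - a 3 - a 0).
Proof.
elim: n => [|n IH]; first by rewrite big_nat1; ring.
by rewrite big_nat_recr //= mulrDr IH a_rec; ring.
Qed.

Lemma tetranacci_sum_odd n :
  3 * \sum_(1 <= k < n.+2) a (2 * k).+1
  = 2 * a (2 * n).+4 + a (2 * n).+2 - a (2 * n).+1
    + (a 3 - 3 * a 2 - a 1 - 2 * a 0).
Proof.
elim: n => [|n IH]; first by rewrite big_nat1 a_rec; ring.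
by rewrite big_nat_recr //= mulrDr IH !mulnS !a_rec; ring.
Qed.

Lemma tetranacci_sum_even n :
  3 * \sum_(1 <= k < n.+2) a (2 * k)
  = 2 * a (2 * n).+3 + a (2 * n).+1 - a (2 * n)
    + (3 * a 2 - 2 * a 3 - a 1 + a 0).
Proof.
elim: n => [|n IH]; first by rewrite big_nat1; ring.
by rewrite big_nat_recr //= mulrDr IH !mulnS !a_rec; ring.
Qed.

End TetranacciSums.

Lemma GR_rec m : GR m.+4 = GR m.+3 + GR m.+2 + GR m.+1 + GR m.
Proof. by []. Qed.

Lemma eq_div3_of_mul (F : numFieldType) (x y : F) : 3 * x = y -> x = y / 3.
Proof. by move=> <-; rewrite mulrC mulKf // pnatr_eq0. Qed.

Theorem mainTheorem14 (n : nat) (hn : (1 <= n)%N) :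
  [/\ \sum_(1 <= k < n.+1) GR k
        = (GR n.+2 + 2 * GR n + GR n.-1 - 10 + 2 * 'i) / 3,
      \sum_(1 <= k < n.+1) GR (2 * k).+1
        = (2 * GR (2 * n).+2 + GR (2 * n) - GR (2 * n).-1 - 11 - 2 * 'i) / 3
    & \sum_(1 <= k < n.+1) GR (2 * k)
        = (2 * GR (2 * n).+1 + GR (2 * n).-1 - GR (2 * n - 2) - 2 - 8 * 'i) / 3].
Proof.
case: n hn => // n _.
have [GR0 GR1 GR2 GR3] : [/\ GR 0 = 4 - 'i, GR 1 = 1 + 4 * 'i,
                            GR 2 = 3 + 'i & GR 3 = 7 + 3 * 'i] by [].
have double_succ : (2 * n.+1 = (2 * n).+2)%N by rewrite mulnS.
rewrite double_succ !succnK !subSS subn0.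
split; apply: eq_div3_of_mul.
- by rewrite (tetranacci_sum GR_rec) GR0 GR1 GR3; ring.
- by rewrite (tetranacci_sum_odd GR_rec) GR0 GR1 GR2 GR3; ring.
- by rewrite (tetranacci_sum_even GR_rec) GR0 GR1 GR2 GR3; ring.
Qed.
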